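(* Let $n$ be a positive integer and $w_1\le\dots\le w_m$ a feasible partition of $n$ with partial sums $R_i=w_1+\dots+w_i$, $R_0=0$. Then for every $1\le i\le m$, $R_{i-1} \ge \frac{w_i-1}{2}$.
   Context: A weighing partition of a positive integer $n$ is a multiset of positive integers summing to $n$ such that every integer $\ell$ with $1\le\ell\le n$ is a sum $\sum_j u_jw_j$ with $u_j\in\{-1,0,1\}$. A feasible partition of $n$ is a weighing partition of $n$ whose number of parts $m$ is minimal among all weighing partitions of $n$, written $w_1\le\dots\le w_m$. *)

From mathcomp Require Import all_boot all_order all_algebra.
Set Implicit Arguments. Unset Strict Implicit. Unset Printing Implicit Defensive.
Import Order.TTheory GRing.Theory Num.Theory.

(* A multiset of positive integers is represented by a sequence s : seq nat
   (order irrelevant for the definitions below). *)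

Definition signed_representable (s : seq nat) (l : nat) : Prop :=
  exists u : seq int,
    size u = size s /\
    all (fun c : int => c \in [:: (-1)%R; 0%R; 1%R]) u /\
    (\sum_(j < size s) nth 0%R u j * Posz (nth 0%N s j))%R = Posz l.

Definition weighing_partition (n : nat) (s : seq nat) : Prop :=
  all (fun x => 0 < x)%N s /\ sumn s = n /\
  forall l, (1 <= l <= n)%N -> signed_representable s l.

Definition feasible_partition (n : nat) (s : seq nat) : Prop :=
  weighing_partition n s /\
  forall t, weighing_partition n t -> (size s <= size t)%N.

From mathcomp Require Import all_boot all_order all_algebra zify.
Import Order.TTheory GRing.Theory Num.Theory.

(* Let [w] be a weight of a sorted weighing partition of [n] and [R] the sum
   of the weights before it. If [w > 2 R + 1], the load [n - (2 R + 1)] cannot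
   be weighed: a representation [sum u_j w_j] of it leaves the deficit
   [sum (1 - u_j) w_j = 2 R + 1], whose coefficients lie in {0, 1, 2}; being
   smaller than [w], the deficit cannot involve [w] or any later weight, so it
   is at most [2 R]. *)

Lemma sumn_take_nth (s : seq nat) (k : nat) :
  sumn (take k s) = \sum_(j < size s | j < k) nth 0 s j.
Proof.
elim: s k => [|x s IH] [|k] /=; rewrite ?big_ord0 //.
  by rewrite big_pred0 // => j.
by rewrite big_mkcond big_ord_recl /= IH big_mkcond.
Qed.

Lemma sumn_nth (s : seq nat) : sumn s = \sum_(j < size s) nth 0 s j.
Proof.
by rewrite -{1}(take_size s) sumn_take_nth; apply: eq_bigl => j; rewrite ltn_ord.
Qed.

Lemma signed_representable_deficit {s : seq nat} {l : nat} :
  signed_representable s l -> (l <= sumn s)%N ->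
  exists2 c : seq nat, all (fun x => x <= 2)%N c &
    \sum_(j < size s) nth 0 c j * nth 0 s j = sumn s - l.
Proof.
move=> [u [size_u [u_signs sum_u]]] le_l_s.
have signP j : (j < size s)%N -> nth 0%R u j \in [:: (-1)%R; 0%R; 1%R].
  by move=> lt_j; apply: (all_nthP 0%R u_signs); rewrite size_u.
exists (map (fun x : int => `|1 - x|%N) u).
  apply/allP => _ /mapP[x /(allP u_signs) x_sign ->].
  by move: x_sign; rewrite !inE => /or3P[] /eqP->.
apply/eqP; rewrite -eqz_nat -subzn // -sum_u sumn_nth -!natz !natr_sum -sumrB.
apply/eqP/eq_bigr => j _; rewrite (nth_map 0%R) ?size_u // !natz PoszM.
by move: (signP j (ltn_ord j)); rewrite !inE => /or3P[] /eqP ->; lia.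
Qed.

Lemma sorted_weighted_sum_lt_nth {s c : seq nat} {k : nat} :
  sorted leq s -> (k < size s)%N -> all (fun x => x <= 2)%N c ->
  (\sum_(j < size s) nth 0 c j * nth 0 s j < nth 0 s k)%N ->
  (\sum_(j < size s) nth 0 c j * nth 0 s j <= (sumn (take k s)).*2)%N.
Proof.
set S := \sum_(j < _) _ => s_sorted lt_k c_le2 lt_S.
have c_le2_nth j : (nth 0 c j <= 2)%N.
  case: (ltnP j (size c)) => [lt_j | ?]; last by rewrite nth_default.
  exact: (all_nthP 0 c_le2).
have late_free (j : 'I_(size s)) : (k <= j)%N -> nth 0 c j * nth 0 s j = 0.
  move=> le_kj; have le_sk_sj : (nth 0 s k <= nth 0 s j)%N.
    by apply: (sorted_leq_nth leq_trans leqnn) => //; rewrite inE.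
  have : (nth 0 c j * nth 0 s j <= S)%N.
    by rewrite /S (bigD1 j) //=; apply: leq_addr.
  by case: (nth 0 c j) => // c' le_term; move: lt_S le_sk_sj; nia.
rewrite -mul2n sumn_take_nth big_distrr /= /S [X in (X <= _)%N]big_mkcond /=.
rewrite [X in (_ <= X)%N]big_mkcond /=; apply: leq_sum => j _.
case: ltnP => [_ | /late_free ->] //.
by rewrite leq_mul2r c_le2_nth orbT.
Qed.

Lemma sorted_weighing_partition_nth_le {n : nat} {s : seq nat} {k : nat} :
  weighing_partition n s -> sorted leq s -> (k < size s)%N ->
  (nth 0 s k <= (sumn (take k s)).*2.+1)%N.
Proof.
move=> [_ [sum_s weighs]] s_sorted lt_k; set R := sumn (take k s).
rewrite leqNgt; apply/negP => big_sk.
have split_s : sumn s = R + (nth 0 s k + sumn (drop k.+1 s)).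
  by rewrite /R -{1}(cat_take_drop k s) sumn_cat (drop_nth 0 lt_k).
have weighs_l : signed_representable s (n - R.*2.+1).
  by apply: weighs; move: sum_s big_sk; rewrite split_s; lia.
have [|c c_le2 deficit] := signed_representable_deficit weighs_l.
  by rewrite sum_s leq_subr.
have := sorted_weighted_sum_lt_nth s_sorted lt_k c_le2.
rewrite deficit sum_s; move: big_sk; rewrite -sum_s split_s; lia.
Qed.

Theorem mainTheorem3 (n : nat) (w : seq nat) :
  (0 < n)%N -> feasible_partition n w -> sorted leq w ->
  forall i : nat, (1 <= i <= size w)%N ->
    ((((nth 0%N w i.-1)%:R : rat) - 1) / 2 <= ((sumn (take i.-1 w))%:R : rat))%R.
Proof.
move=> _ [weighing _] w_sorted [|k] //= lt_k.
have := sorted_weighing_partition_nth_le weighing w_sorted lt_k.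
rewrite ler_pdivrMr // lerBlDr -natrM natr1 ler_nat; lia.
Qed.
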